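(* For every $n\in\mathbb N$, $\mathrm{Ind}_{\mathrm B}(\ell_\infty(n):\mathbb C1_n)=n$, where $1_n=(1,\dots,1)\in\ell_\infty(n)$.
   Context: $\ell_\infty(n)$ is $\mathbb C^n$ with the sup norm. For a closed subspace $X_0$ of a Banach space $X$, the bounded index is $\mathrm{Ind}_{\mathrm B}(X:X_0)=\inf\{\|T\|:T\in\mathcal L(X,X_0),\ \|T-\mathrm{id}_X\|\le\|T\|-1\}$, where $\mathcal L(X,X_0)$ denotes bounded linear maps $X\to X_0$ (regarded as maps into $X$); equivalently $\mathrm{Ind}_{\mathrm B}(X:X_0)^{-1}=\sup\{\lambda\ge0:\exists T\in\mathcal L(X,X_0),\ \|T\|=1,\ \|T-\lambda\,\mathrm{id}_X\|\le1-\lambda\}$. *)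

From HB Require Import structures.
From mathcomp Require Import all_boot all_order all_algebra.
From mathcomp Require Import complex.
From mathcomp Require Import boolp classical_sets reals constructive_ereal ereal.
Set Implicit Arguments. Unset Strict Implicit. Unset Printing Implicit Defensive.
Import Order.TTheory GRing.Theory Num.Theory.
Local Open Scope ring_scope.
Local Open Scope classical_set_scope.

Section LinfDefs.
Variable R : realType.

Definition cmod (z : R[i]) : R := Normc.normc z.

Definition linf_norm (n : nat) (x : 'cV[R[i]]_n) : R :=
  \big[Num.max/0]_(k < n) cmod (x k ord0).

Definition op_norm (n : nat) (T : 'M[R[i]]_n) : R :=
  sup [set linf_norm (T *m x) | x in [set x : 'cV[R[i]]_n | linf_norm x <= 1]].

Definition ones (n : nat) : 'cV[R[i]]_n := const_mx 1.

Definition maps_into_C1 (n : nat) (T : 'M[R[i]]_n) : Prop :=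
  forall x : 'cV[R[i]]_n, exists c : R[i], T *m x = c *: ones n.

(* bounded index Ind_B(l_infty(n) : C 1_n), as an extended real (inf of empty set = +oo) *)
Definition IndB_C1 (n : nat) : \bar R :=
  ereal_inf [set (op_norm T)%:E | T in
    [set T : 'M[R[i]]_n | maps_into_C1 T /\ op_norm (T - 1%:M) <= op_norm T - 1]].

End LinfDefs.

(* The range condition forces every row of T to be the same row a, and then the
   operator norm of T, T - 1 on l_infty(n) is the largest row sum, so
   |T| = sum_k |a_k| and the i-th row of T - 1 has sum |T| - |a_i| + |a_i - 1|.
   The hypothesis |T - 1| <= |T| - 1 thus gives |a_i - 1| <= |a_i| - 1, whence
   |a_i| >= 1 for every i and |T| >= n.  The bound is attained by the all-ones
   matrix, i.e. the map x |-> (sum_k x_k) 1_n. *)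
From HB Require Import structures.
From mathcomp Require Import all_boot all_order all_algebra.
From mathcomp Require Import complex.
From mathcomp Require Import boolp classical_sets reals constructive_ereal ereal.
From mathcomp Require Import ring lra.
Set Implicit Arguments. Unset Strict Implicit. Unset Printing Implicit Defensive.
Import Order.TTheory GRing.Theory Num.Theory.
Local Open Scope ring_scope.
Local Open Scope complex_scope.

Section ComplexModulus.
Variable R : realType.
Local Notation C := R[i].

Lemma normcE (z : C) : `|z| = (cmod z)%:C. Proof. by []. Qed.

Lemma cmod_ge0 (z : C) : 0 <= cmod z.
Proof. by case: z => a b; exact: sqrtr_ge0. Qed.

Lemma cmod0 : cmod (0 : C) = 0. Proof. exact: Normc.normc0. Qed.
Lemma cmod1 : cmod (1 : C) = 1. Proof. exact: Normc.normc1. Qed.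
Lemma cmodM (a b : C) : cmod (a * b) = cmod a * cmod b. Proof. exact: Normc.normcM. Qed.
Lemma cmodV (z : C) : cmod z^-1 = (cmod z)^-1. Proof. exact: Normc.normcV. Qed.
Lemma cmodD (a b : C) : cmod (a + b) <= cmod a + cmod b. Proof. exact: le_normcD. Qed.

Lemma cmod_eq0 (z : C) : (cmod z == 0) = (z == 0).
Proof. by apply/eqP/eqP => [/Normc.eq0_normc | ->] //; exact: cmod0. Qed.

Lemma cmod_conj (z : C) : cmod z^* = cmod z.
Proof. by case: z => a b; rewrite /cmod /Normc.normc /= sqrrN. Qed.

Lemma cmod_real (r : R) : cmod r%:C = `|r|.
Proof. by rewrite /cmod /Normc.normc /= expr0n /= addr0 sqrtr_sqr. Qed.

Lemma cmod_sum (I : Type) (r : seq I) (P : pred I) (f : I -> C) :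
  cmod (\sum_(i <- r | P i) f i) <= \sum_(i <- r | P i) cmod (f i).
Proof. by rewrite -lecR -normcE (rmorph_sum (real_complex R)) ler_norm_sum. Qed.

Lemma mulc_conj (z : C) : z * z^* = ((cmod z) ^+ 2)%:C.
Proof.
case: z => a b; rewrite /cmod /Normc.normc /= sqr_sqrtr ?addr_ge0 ?sqr_ge0 //.
by apply/eqP; rewrite eq_complex /=; apply/andP; split; apply/eqP; ring.
Qed.

(* The unimodular factor rotating z onto the nonnegative real axis (1 at z = 0). *)
Definition conj_sgn (z : C) : C := if z == 0 then 1 else z^* / (cmod z)%:C.

Lemma cmod_conj_sgn_le1 (z : C) : cmod (conj_sgn z) <= 1.
Proof.
rewrite /conj_sgn; case: eqP => [_ | /eqP z0]; first by rewrite cmod1.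
rewrite cmodM cmodV cmod_conj cmod_real ger0_norm ?cmod_ge0 //.
by rewrite divrr // unitfE cmod_eq0.
Qed.

Lemma mul_conj_sgn (z : C) : z * conj_sgn z = (cmod z)%:C.
Proof.
rewrite /conj_sgn; case: eqP => [-> | /eqP z0]; first by rewrite mul0r cmod0.
have cz0 : (cmod z)%:C != 0 by rewrite -normcE normr_eq0.
by rewrite mulrA mulc_conj expr2 rmorphM /= -mulrA divrr ?unitfE // mulr1.
Qed.

End ComplexModulus.

Section OperatorNorm.
Variables (R : realType) (n : nat).
Local Notation C := R[i].
Implicit Types (x : 'cV[C]_n) (M : 'M[C]_n).

Definition row_sum M (i : 'I_n) : R := \sum_k cmod (M i k).

Lemma row_sum_ge0 M i : 0 <= row_sum M i.
Proof. by apply: sumr_ge0 => k _; exact: cmod_ge0. Qed.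

Lemma cmod_le_linf_norm x k : cmod (x k ord0) <= linf_norm x.
Proof. by rewrite /linf_norm (bigD1 k) //= le_max lexx. Qed.

Lemma linf_norm_le x B :
  0 <= B -> (forall k, cmod (x k ord0) <= B) -> linf_norm x <= B.
Proof.
move=> B0 xB; apply: (big_ind (fun v => v <= B)) => // a b aB bB.
by rewrite ge_max aB bB.
Qed.

Lemma cmod_mulmx_le_row_sum M x i :
  linf_norm x <= 1 -> cmod ((M *m x) i ord0) <= row_sum M i.
Proof.
move=> x1; rewrite mxE; apply: le_trans; first exact: cmod_sum.
apply: ler_sum => k _; rewrite cmodM -[leRHS]mulr1 ler_wpM2l ?cmod_ge0 //.
exact: le_trans (cmod_le_linf_norm _ _) x1.
Qed.

Lemma linf_norm_mulmx_le_row_sums M x B :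
  0 <= B -> (forall i, row_sum M i <= B) -> linf_norm x <= 1 ->
  linf_norm (M *m x) <= B.
Proof.
move=> B0 MB x1; apply: linf_norm_le => // i.
exact: le_trans (cmod_mulmx_le_row_sum M i x1) (MB i).
Qed.

Lemma op_norm_le_row_sums M B :
  0 <= B -> (forall i, row_sum M i <= B) -> op_norm M <= B.
Proof.
move=> B0 MB; apply: ge_sup.
  have x0 : linf_norm (0 : 'cV[C]_n) <= 1 by apply: linf_norm_le => // k; rewrite mxE cmod0.
  by exists (linf_norm (M *m 0)), 0.
by move=> _ [x x1 <-]; exact: linf_norm_mulmx_le_row_sums.
Qed.

Lemma linf_norm_mulmx_le_op_norm M x :
  linf_norm x <= 1 -> linf_norm (M *m x) <= op_norm M.
Proof.
move=> x1; apply: ub_le_sup; last by exists x.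
exists (\sum_i row_sum M i) => _ [y y1 <-].
apply: linf_norm_mulmx_le_row_sums y1 => [|i]; first by apply: sumr_ge0 => *; exact: row_sum_ge0.
by rewrite [leRHS](bigD1 i) //= lerDl; apply: sumr_ge0 => *; exact: row_sum_ge0.
Qed.

(* Test M against the unimodular vector aligning the phases of row i. *)
Lemma row_sum_le_op_norm M i : row_sum M i <= op_norm M.
Proof.
pose x := \col_k conj_sgn (M i k).
have x1 : linf_norm x <= 1 by apply: linf_norm_le => // k; rewrite mxE cmod_conj_sgn_le1.
apply: le_trans (linf_norm_mulmx_le_op_norm M x1); apply: le_trans (cmod_le_linf_norm _ i).
rewrite mxE (eq_bigr (fun k => (cmod (M i k))%:C)); last by move=> k _; rewrite mxE mul_conj_sgn.
by rewrite -(rmorph_sum (real_complex R)) cmod_real ger0_norm ?row_sum_ge0.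
Qed.

Lemma maps_into_C1_rows M : maps_into_C1 M -> forall i j k, M i k = M j k.
Proof.
move=> MC i j k; have [c Mk] := MC (delta_mx k ord0).
have Mc l : M l k = c by move/matrixP: Mk => /(_ l ord0); rewrite -colE !mxE mulr1.
by rewrite !Mc.
Qed.

Lemma sum_one_sub_delta (i : 'I_n) : \sum_k (1 - ((i == k)%:R : R)) = n%:R - 1.
Proof.
rewrite sumrB sumr_const card_ord (bigD1 i) //= eqxx big1 ?addr0 //.
by move=> k /negPf; rewrite eq_sym => ->.
Qed.

Lemma row_sum_sub1 M i :
  row_sum (M - 1%:M) i = row_sum M i - cmod (M i i) + cmod (M i i - 1).
Proof.
rewrite /row_sum (bigD1 i) //= [in RHS](bigD1 i) //= !mxE eqxx mulr1n.
rewrite (eq_bigr (fun k => cmod (M i k))) => [|k /negPf]; first by ring.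
by rewrite !mxE eq_sym => ->; rewrite subr0.
Qed.

End OperatorNorm.

Section BoundedIndex.
Variables (R : realType) (n : nat).
Hypothesis n_gt0 : (0 < n)%N.
Local Notation C := R[i].

Lemma IndB_C1_lower_bound (T : 'M[C]_n) :
  maps_into_C1 T -> op_norm (T - 1%:M) <= op_norm T - 1 -> n%:R <= op_norm T.
Proof.
move=> TC T1; pose i0 := Ordinal n_gt0.
have rowsT := maps_into_C1_rows TC.
have rowT i : row_sum T i = row_sum T i0 by apply: eq_bigr => k _; rewrite (rowsT i i0).
have normT : op_norm T <= row_sum T i0.
  by apply: op_norm_le_row_sums => [|i]; rewrite ?row_sum_ge0 ?rowT.
have rowT1 i : row_sum (T - 1%:M) i <= row_sum T i0 - 1.
  by apply: le_trans (row_sum_le_op_norm _ i) _; lra.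
have Tii_ge1 i : 1 <= cmod (T i i).
  have := rowT1 i; rewrite row_sum_sub1 rowT.
  have := cmodD (T i i - 1) 1; rewrite subrK; have := cmod_ge0 (T i i - 1); lra.
suff : n%:R - 1 <= row_sum (T - 1%:M) i0 by have := row_sum_le_op_norm (T - 1%:M) i0; lra.
rewrite -(sum_one_sub_delta _ i0); apply: ler_sum => k _; rewrite !mxE.
case: eqP => _; first by rewrite subrr cmod_ge0.
by rewrite !mulr0n !subr0 (rowsT i0 k) Tii_ge1.
Qed.

Let J : 'M[C]_n := const_mx 1.

Lemma maps_into_C1_const1 : maps_into_C1 J.
Proof.
move=> x; exists (\sum_k x k ord0); apply/matrixP => i j.
by rewrite !mxE mulr1 (ord1 j); apply: eq_bigr => k _; rewrite mxE mul1r.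
Qed.

Lemma op_norm_const1 : op_norm J = n%:R.
Proof.
have rowJ i : row_sum J i = n%:R.
  by rewrite /row_sum (eq_bigr (fun=> 1)) ?sumr_const ?card_ord // => k _; rewrite mxE cmod1.
apply/le_anti; rewrite -(rowJ (Ordinal n_gt0)) row_sum_le_op_norm andbT.
by apply: op_norm_le_row_sums => [|i]; rewrite ?row_sum_ge0 ?rowJ.
Qed.

Lemma op_norm_const1_sub1 : op_norm (J - 1%:M) <= op_norm J - 1.
Proof.
have rowJ1 i : row_sum (J - 1%:M) i = n%:R - 1.
  rewrite -(sum_one_sub_delta _ i); apply: eq_bigr => k _.
  by rewrite !mxE; case: eqP => _; rewrite ?mulr1n ?mulr0n ?subrr ?subr0 ?cmod0 ?cmod1.
rewrite op_norm_const1; apply: op_norm_le_row_sums => [|i]; last by rewrite rowJ1.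
by rewrite subr_ge0 ler1n.
Qed.

End BoundedIndex.

Theorem mainTheorem19 (R : realType) (n : nat) (hn : (0 < n)%N) :
  IndB_C1 R n = (n%:R)%:E.
Proof.
apply/le_anti/andP; split.
  rewrite -(op_norm_const1 R hn); apply: ereal_inf_lbound.
  by exists (const_mx 1); split; [exact: maps_into_C1_const1 | exact: op_norm_const1_sub1].
apply: le_ereal_inf_tmp => _ [T [TC T1] <-].
by rewrite lee_fin IndB_C1_lower_bound.
Qed.
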